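(* Let $n\ge 3$ and let $i\ge 0$ be an integer with $i>(n-4)(n-1)$. Then the map $\mathrm{per}$ restricts to a bijection from $\mathcal{L}_i$ onto $\mathcal{L}_{i+n-1}$.
   Context: Fix an integer $n\ge 3$. A partition is a sequence $\Lambda=(\lambda_j)_{j\ge1}$ of non-negative integers with finite support; $\mathrm{wt}(\Lambda)=\sum_j j\lambda_j$; $\mathrm{Part}(k)$ is the set of partitions with $\lambda_j=0$ for $j>k$. Write $x^\Lambda=\prod_j x_j^{\lambda_j}$, $\deg(x^\Lambda)=\sum_j\lambda_j$. $\mathcal{B}=\{x^\Lambda\partial_k : 1\le k\le n,\ \Lambda\in\mathrm{Part}(k-1)\}$ (formal monomials times the symbol $\partial_k$). For an integer $i\ge-1$, let $r_i\in\{1,\dots,n-1\}$ with $i\equiv r_i\pmod{n-1}$ and $h_i=\lfloor (i-1)/(n-1)\rfloor+1$. Define $\mathrm{WD}(x^\Lambda\partial_k)=\mathrm{wt}(\Lambda)-\deg(x^\Lambda)+n-k$ and $\mathrm{lev}_i(x^\Lambda\partial_k)=h_i\,\mathrm{WD}(x^\Lambda\partial_k)+\deg(x^\Lambda)-1$. For $i\ge-1$, $\mathcal{N}_i=\{b\in\mathcal{B}: \mathrm{lev}_j(b)\le j\text{ for some integer } -1\le j\le i\}$, and $\mathcal{L}_i=\mathcal{N}_i\setminus\mathcal{N}_{i-1}$ for $i\ge0$. For $x^\Lambda\partial_k\in\mathcal{B}$ with $\mathrm{WD}(x^\Lambda\partial_k)\le n-1$, the period function is $\mathrm{per}(x^\Lambda\partial_k)=x_1^{\,n-1-\mathrm{WD}(x^\Lambda\partial_k)}x^\Lambda\partial_k$.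 *)

From Stdlib Require Import ZArith List Lia.
Import ListNotations.
Open Scope Z_scope.

(* An element x^Lambda d_k of B is represented by k and the list
   [lambda_1; ...; lambda_{k-1}] (so Lambda in Part(k-1), and the
   representation is canonical: lambda_j = 0 for j >= k). *)
Record Bel := mkB { bk : nat; blam : list nat }.

Definition validB (n : nat) (b : Bel) : Prop :=
  (1 <= bk b <= n)%nat /\ length (blam b) = (bk b - 1)%nat.

Fixpoint wt_aux (j : nat) (l : list nat) : nat :=
  match l with
  | [] => 0%nat
  | x :: l' => (j * x + wt_aux (S j) l')%nat
  end.
Definition wt (l : list nat) : nat := wt_aux 1 l.

Definition deg (l : list nat) : nat := list_sum l.

Definition WD (n : nat) (b : Bel) : Z :=
  Z.of_nat (wt (blam b)) - Z.of_nat (deg (blam b)) + Z.of_nat n - Z.of_nat (bk b).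

Definition hh (n : nat) (i : Z) : Z := (i - 1) / (Z.of_nat n - 1) + 1.

Definition lev (n : nat) (i : Z) (b : Bel) : Z :=
  hh n i * WD n b + Z.of_nat (deg (blam b)) - 1.

Definition inN (n : nat) (i : Z) (b : Bel) : Prop :=
  validB n b /\ exists j : Z, -1 <= j <= i /\ lev n j b <= j.

Definition inL (n : nat) (i : Z) (b : Bel) : Prop :=
  inN n i b /\ ~ inN n (i - 1) b.

(* per(x^Lambda d_k) = x_1^{n-1-WD} x^Lambda d_k  (meaningful when WD <= n-1;
   for k = 1 one has WD = n-1, so the factor is trivial). *)
Definition per (n : nat) (b : Bel) : Bel :=
  mkB (bk b)
      (match blam b with
       | [] => []
       | x :: l => (x + Z.to_nat (Z.of_nat n - 1 - WD n b))%nat :: l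
       end).

From Stdlib Require Import ZArith List Lia.
Import ListNotations.
Open Scope Z_scope.

(** Write [N = n - 1].  Multiplying by [x_1^(N - WD b)] leaves [WD] unchanged
    and raises [deg] by [N - WD b]; since [h_(j+N) = h_j + 1], this gives
    [lev_(j+N) (per b) = lev_j b + N], so [per] moves the first level at which
    [b] enters [N_j] from [i] to [i + N].  Elements of [L_i] with [i >= 0] have
    positive degree and [WD < N], which keeps [per b] out of the small levels
    [j < N - 1].  Conversely, [c] in [L_(i+N)] lies in the image of [per] as
    soon as its [x_1]-exponent is at least [N - WD c]; otherwise
    [deg c < N] and [c] already enters at level
    [(deg c - 1) N <= (n - 3)(n - 1) < i + N], which is where the lower bound
    on [i] is needed. *)

Lemma wt_aux_ge j l : (j * list_sum l <= wt_aux j l)%nat.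
Proof.
  revert j; induction l as [|a l IH]; intro j; simpl; [lia|].
  specialize (IH (S j)); nia.
Qed.

Lemma wt_aux_le j l : (wt_aux j l <= (j + length l - 1) * list_sum l)%nat.
Proof.
  revert j; induction l as [|a l IH]; intro j; simpl; [lia|].
  specialize (IH (S j)); nia.
Qed.

Section Period.

Variable n : nat.
Local Notation N := (Z.of_nat n - 1).
Local Notation degZ b := (Z.of_nat (deg (blam b))).

Lemma WD_cons k x l :
  WD n (mkB k (x :: l)) =
  Z.of_nat (wt_aux 2 l) - Z.of_nat (list_sum l) + Z.of_nat n - Z.of_nat k.
Proof. unfold WD, wt, deg; simpl; lia. Qed.

Lemma WD_nil b : validB n b -> blam b = [] -> WD n b = N.
Proof.
  intros [Hk Hlen] Hnil; rewrite Hnil in Hlen; simpl in Hlen.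
  unfold WD, wt, deg; rewrite Hnil; simpl; lia.
Qed.

Lemma WD_deg1 b : validB n b -> deg (blam b) = 1%nat -> WD n b <= N - 1.
Proof.
  intros [Hk Hlen] Hdeg; unfold WD, wt, deg in *.
  pose proof (wt_aux_le 1 (blam b)) as Hwt; rewrite Hdeg, Hlen in Hwt.
  rewrite Hdeg; lia.
Qed.

(* [hd 0 (blam b)] is the exponent of [x_1] (zero when [k = 1]). *)
Lemma deg_le_hd_add_WD b :
  validB n b -> degZ b <= Z.of_nat (hd 0%nat (blam b)) + WD n b.
Proof.
  intros V; destruct b as [k [|x l]]; simpl.
  - rewrite (WD_nil _ V eq_refl); destruct V as [Hk _]; simpl in Hk.
    unfold deg; simpl; lia.
  - rewrite WD_cons; pose proof (wt_aux_ge 2 l).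
    destruct V as [Hk _]; simpl in Hk; unfold deg; simpl; lia.
Qed.

Lemma validB_per b : validB n b -> validB n (per n b).
Proof. destruct b as [k [|x l]]; intros [Hk Hlen]; split; simpl in *; auto. Qed.

Lemma WD_per b : WD n (per n b) = WD n b.
Proof.
  destruct b as [k [|x l]]; [reflexivity|].
  unfold per; simpl; rewrite !WD_cons; reflexivity.
Qed.

Lemma deg_per b :
  validB n b -> WD n b <= N -> degZ (per n b) = degZ b + (N - WD n b).
Proof.
  intros V HW; destruct b as [k [|x l]].
  - rewrite (WD_nil _ V eq_refl); simpl; lia.
  - unfold per, deg; simpl; lia.
Qed.

Lemma per_inj b1 b2 : per n b1 = per n b2 -> b1 = b2.
Proof.
  destruct b1 as [k1 [|x1 l1]], b2 as [k2 [|x2 l2]]; unfold per; simpl;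
    intros Heq; injection Heq; try discriminate; [congruence|].
  intros -> Hx ->; rewrite !WD_cons in Hx; do 2 f_equal; lia.
Qed.

Lemma per_surj c :
  validB n c -> WD n c <= N -> N - WD n c <= Z.of_nat (hd 0%nat (blam c)) ->
  exists b, validB n b /\ per n b = c.
Proof.
  intros V HW Hx; destruct c as [k [|x l]].
  - exists (mkB k []); split; [exact V | reflexivity].
  - exists (mkB k ((x - Z.to_nat (N - WD n (mkB k (x :: l))))%nat :: l)).
    destruct V as [Hk Hlen]; split; [split; simpl in *; auto|].
    simpl in Hx; unfold per; simpl; rewrite !WD_cons in *.
    do 2 f_equal; lia.
Qed.

Section Levels.

Hypothesis n_ge3 : (3 <= n)%nat.

Lemma hh_spec j : N * (hh n j - 1) < j <= N * hh n j.
Proof.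
  unfold hh.
  pose proof (Z.div_mod (j - 1) N ltac:(lia)).
  pose proof (Z.mod_pos_bound (j - 1) N ltac:(lia)).
  nia.
Qed.

Lemma hh_unique j h : N * (h - 1) < j <= N * h -> hh n j = h.
Proof. intros Hj; pose proof (hh_spec j); nia. Qed.

Lemma hh_add j : hh n (j + N) = hh n j + 1.
Proof. apply hh_unique; pose proof (hh_spec j); lia. Qed.

Lemma hh_small j : -1 <= j <= 0 -> hh n j = 0.
Proof. intros; apply hh_unique; lia. Qed.

Lemma hh_one j : 1 <= j <= N -> hh n j = 1.
Proof. intros; apply hh_unique; lia. Qed.

Lemma hh_mul d : hh n (d * N) = d.
Proof. apply hh_unique; nia. Qed.

Lemma lev_small j b : -1 <= j <= 0 -> lev n j b = degZ b - 1.
Proof. intros Hj; unfold lev; rewrite hh_small by exact Hj; lia. Qed.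

Lemma lev_per j b :
  validB n b -> WD n b <= N -> lev n (j + N) (per n b) = lev n j b + N.
Proof.
  intros V HW; unfold lev.
  rewrite hh_add, WD_per, (deg_per _ V HW); ring.
Qed.

Lemma lev_per_small j b :
  validB n b -> (1 <= deg (blam b))%nat -> WD n b <= N - 1 ->
  -1 <= j < N - 1 -> j < lev n j (per n b).
Proof.
  intros V Hdeg HW Hj; unfold lev; rewrite WD_per, (deg_per _ V ltac:(lia)).
  destruct (Z_le_gt_dec j 0).
  - rewrite hh_small by lia; lia.
  - rewrite hh_one by lia; lia.
Qed.

(* Once [WD b >= N], [lev_j b >= j + deg b - 1], so only degree [<= 1] can enter;
   degree one forces [WD b < N]. *)
Lemma WD_lt_of_inN i b : inN n i b -> (1 <= deg (blam b))%nat -> WD n b <= N - 1.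
Proof.
  intros [V [j [Hj Hlev]]] Hdeg.
  destruct (Z_le_gt_dec (WD n b) (N - 1)) as [|HW]; [assumption|].
  enough (Hdeg1 : deg (blam b) = 1%nat) by (pose proof (WD_deg1 _ V Hdeg1); lia).
  destruct (Z_le_gt_dec j 0).
  - rewrite lev_small in Hlev by lia; lia.
  - pose proof (hh_spec j); unfold lev in Hlev; nia.
Qed.

Lemma inN_mono i i' b : i <= i' -> inN n i b -> inN n i' b.
Proof.
  intros Hi [V [j [Hj Hlev]]]; split; [exact V|].
  exists j; split; [lia | exact Hlev].
Qed.

Lemma inL_iff i b :
  inL n i b <->
  validB n b /\ -1 <= i /\ lev n i b <= i /\ (forall j, -1 <= j < i -> j < lev n j b).
Proof.
  split.
  - intros [[V [j [Hj Hlev]]] Hout].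
    assert (Hfirst : forall j, -1 <= j < i -> j < lev n j b).
    { intros j' Hj'; destruct (Z_lt_le_dec j' (lev n j' b)) as [|Hle]; [assumption|].
      exfalso; apply Hout; split; [exact V|]; exists j'; split; [lia | exact Hle]. }
    assert (j = i) by (destruct (Z.eq_dec j i); [assumption|]; specialize (Hfirst j); lia).
    subst j; split; [exact V|]; split; [lia|]; split; [exact Hlev | exact Hfirst].
  - intros (V & Hi & Hlev & Hfirst); split.
    + split; [exact V|]; exists i; split; [lia | exact Hlev].
    + intros [_ [j [Hj Hle]]]; specialize (Hfirst j); lia.
Qed.

Lemma deg_gt_of_inL i j b :
  inL n i b -> -1 <= j <= 0 -> j < i -> j + 1 < degZ b.
Proof.
  intros HL Hj Hji; apply inL_iff in HL as (_ & _ & _ & Hfirst).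
  specialize (Hfirst j ltac:(lia)); rewrite lev_small in Hfirst by exact Hj; lia.
Qed.

Lemma inL_per i b :
  0 <= i -> inL n i b -> WD n b <= N - 1 /\ inL n (i + N) (per n b).
Proof.
  intros Hi HL.
  assert (Hdeg : (1 <= deg (blam b))%nat) by (pose proof (deg_gt_of_inL _ (-1) _ HL); lia).
  assert (HW : WD n b <= N - 1) by exact (WD_lt_of_inN _ _ (proj1 HL) Hdeg).
  split; [exact HW|].
  apply inL_iff in HL as (V & _ & Hlev & Hfirst); apply inL_iff.
  split; [exact (validB_per _ V)|]; split; [lia|].
  rewrite lev_per by (assumption || lia); split; [lia|].
  intros j Hj; destruct (Z_lt_le_dec j (N - 1)).
  - apply lev_per_small; auto; lia.
  - replace j with (j - N + N) by ring.
    rewrite lev_per by (assumption || lia); specialize (Hfirst (j - N)); lia.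
Qed.

Lemma inL_of_inL_per i b :
  validB n b -> WD n b <= N -> -1 <= i -> inL n (i + N) (per n b) -> inL n i b.
Proof.
  intros V HW Hi HL; apply inL_iff in HL as (_ & _ & Hlev & Hfirst); apply inL_iff.
  rewrite lev_per in Hlev by assumption.
  split; [exact V|]; split; [lia|]; split; [lia|].
  intros j Hj; specialize (Hfirst (j + N) ltac:(lia)).
  rewrite lev_per in Hfirst by assumption; lia.
Qed.

(* The witness level is [(d - 1) N] with [d = deg c], as [h = d - 1] there and
   [lev = (d - 1)(WD c + 1)]. *)
Lemma inN_of_hd_small c :
  validB n c -> (1 <= deg (blam c))%nat ->
  Z.of_nat (hd 0%nat (blam c)) < N - WD n c ->
  inN n ((Z.of_nat n - 3) * N) c.
Proof.
  intros V Hdeg Hx; pose proof (deg_le_hd_add_WD _ V) as Hd.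
  split; [exact V|]; exists ((degZ c - 1) * N); split; [nia|].
  unfold lev; rewrite hh_mul; nia.
Qed.

Lemma inL_per_preimage i c :
  0 <= i -> (Z.of_nat n - 4) * N < i -> inL n (i + N) c ->
  exists b, inL n i b /\ per n b = c.
Proof.
  intros Hi Hth HL.
  assert (Hdeg : (2 <= deg (blam c))%nat) by (pose proof (deg_gt_of_inL _ 0 _ HL); lia).
  assert (HW : WD n c <= N - 1) by (apply (WD_lt_of_inN (i + N)); [apply HL | lia]).
  assert (Hx : N - WD n c <= Z.of_nat (hd 0%nat (blam c))).
  { destruct (Z_le_gt_dec (N - WD n c) (Z.of_nat (hd 0%nat (blam c)))) as [|Hlt];
      [assumption|].
    exfalso; apply (proj2 HL), (inN_mono ((Z.of_nat n - 3) * N)); [nia|].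
    apply inN_of_hd_small; [apply HL | lia | lia]. }
  destruct (per_surj _ (proj1 (proj1 HL)) ltac:(lia) Hx) as [b [V Hb]].
  exists b; split; [|exact Hb].
  subst c; rewrite WD_per in HW.
  apply inL_of_inL_per; auto; lia.
Qed.

End Levels.

End Period.

Theorem corollary2p17 (n : nat) (i : Z) :
  (3 <= n)%nat -> 0 <= i -> (Z.of_nat n - 4) * (Z.of_nat n - 1) < i ->
  (forall b, inL n i b -> WD n b <= Z.of_nat n - 1 /\
                          inL n (i + Z.of_nat n - 1) (per n b)) /\
  (forall b1 b2, inL n i b1 -> inL n i b2 -> per n b1 = per n b2 -> b1 = b2) /\
  (forall c, inL n (i + Z.of_nat n - 1) c -> exists b, inL n i b /\ per n b = c).
Proof.
  intros Hn Hi Hth.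
  replace (i + Z.of_nat n - 1) with (i + (Z.of_nat n - 1)) by ring.
  split; [|split].
  - intros b HL; destruct (inL_per n Hn i b Hi HL); split; [lia | assumption].
  - intros b1 b2 _ _; apply per_inj.
  - intros c; apply inL_per_preimage; assumption.
Qed.
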